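(* Let $p,q\in(0,1)$, let $x,y,k$ be natural numbers and $N,T$ be positive integers. Then $$\mathbb{P}^{(x,y)}_{p,q}(Z_T\ge kN)\ge\gamma^{*a}([k,+\infty)),$$ where $a=\min(\lfloor x/N\rfloor,\lfloor y/N\rfloor)$ and $\gamma$ is the law of $\lfloor Z_T/N\rfloor$ under $\mathbb{P}^{(N,N)}_{p,q}$ (with the convention $\gamma^{*0}=\delta_0$).
   Context: Cooperative model: for $p,q\in(0,1)$, a Markov chain $(X_n,Y_n)_{n\ge0}$ on $\mathbb{N}^2$ whose transition law from state $(x,y)$ is $\mu_{(x,y)}=\mathrm{Bin}(2,q)^{*(x+y)}\otimes\mathrm{Bin}(2,p)^{*\min(x,y)}$, i.e. given the past, $X_{n+1}\sim\mathrm{Bin}(2(X_n+Y_n),q)$ and $Y_{n+1}\sim\mathrm{Bin}(2\min(X_n,Y_n),p)$ are independent. $\mathbb{P}^{(x,y)}_{p,q}$ denotes the law of this process started from $(x,y)$. $Z_n=\min(X_n,Y_n)$. *)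

(* probabilities as values in an abstract R : realType
   (only finite sums are needed since binomial laws have finite support). *)
From mathcomp Require Import all_boot all_order all_algebra.
From mathcomp Require Import reals.
Set Implicit Arguments. Unset Strict Implicit. Unset Printing Implicit Defensive.
Import Order.TTheory GRing.Theory Num.Theory.
Local Open Scope ring_scope.

Definition binpmf (R : realType) (n : nat) (r : R) (i : nat) : R :=
  ('C(n, i))%:R * r ^+ i * (1 - r) ^+ (n - i).

(* chain_expect p q n x y f = E^{(x,y)}_{p,q}[ f(X_n, Y_n) ] for the
   cooperative model: X_{n+1} ~ Bin(2(X_n+Y_n), q), Y_{n+1} ~ Bin(2 min(X_n,Y_n), p)
   independent given the past; computed by first-step (Markov) analysis. *)
Fixpoint chain_expect (R : realType) (p q : R) (n x y : nat)
    (f : nat -> nat -> R) {struct n} : R :=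
  match n with
  | 0 => f x y
  | n'.+1 =>
      \sum_(i < (2 * (x + y)).+1) \sum_(j < (2 * minn x y).+1)
        binpmf (2 * (x + y)) q i * binpmf (2 * minn x y) p j
        * chain_expect p q n' i j f
  end.

Definition chain_prob (R : realType) (p q : R) (n x y : nat)
    (E : nat -> nat -> bool) : R :=
  chain_expect p q n x y (fun u v => (E u v)%:R).

(* gamma = law of floor(Z_T / N) under P^{(N,N)}_{p,q}, Z = min(X,Y).
   gamma_conv_tail p q N T a k = gamma^{*a}([k, +oo)), i.e. the probability
   that a sum of a i.i.d. gamma-distributed variables is >= k, with
   gamma^{*0} = delta_0.  Recursion: P(G + S >= k) = E[ P(S >= k - G) ]
   (truncated subtraction, since P(S >= 0) = 1). *)
Fixpoint gamma_conv_tail (R : realType) (p q : R) (N T a k : nat) {struct a} : R :=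
  match a with
  | 0 => (k == 0%N)%:R
  | a'.+1 =>
      chain_expect p q T N N
        (fun u v => gamma_conv_tail p q N T a' (k - minn u v %/ N))
  end.

From mathcomp Require Import all_boot all_order all_algebra.
From mathcomp Require Import reals.
From mathcomp Require Import ring zify.
Import Order.TTheory GRing.Theory Num.Theory.
Local Open Scope ring_scope.
Set Implicit Arguments. Unset Strict Implicit.

(* The chain is superadditive in its initial state: for every test function
   nondecreasing in both coordinates, the chain started from
   (x1 + x2, y1 + y2) dominates the sum of two independent copies started from
   (x1, y1) and (x2, y2).  For one step this is Bin(m1, r) * Bin(m2, r) =
   Bin(m1 + m2, r) together with min(x1 + x2, y1 + y2) >= min(x1, y1) +
   min(x2, y2), a binomial law being stochastically increasing in its number
   of trials.  Writing (x, y) as a blocks (N, N) plus a remainder and applying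
   superadditivity a times, floor(Z_T / N) dominates a sum of a independent
   gamma-distributed variables. *)

Definition bin_expect (R : realType) (m : nat) (r : R) (h : nat -> R) : R :=
  \sum_(i < m.+1) binpmf m r i * h i.

Section BinomialExpectation.
Variables (R : realType) (r : R).
Hypothesis r01 : 0 <= r <= 1.

Lemma binpmf_ge0 m i : 0 <= binpmf m r i.
Proof.
by case/andP: r01 => r0 r1; rewrite !mulr_ge0 ?ler0n ?exprn_ge0 ?subr_ge0.
Qed.

Lemma binpmf_small m i : (m < i)%N -> binpmf m r i = 0.
Proof. by move=> lt_mi; rewrite /binpmf bin_small // !mul0r. Qed.

Lemma binpmfS0 m : binpmf m.+1 r 0 = (1 - r) * binpmf m r 0.
Proof. by rewrite /binpmf !bin0 !subn0 exprS; ring. Qed.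

Lemma binpmfSS m i :
  binpmf m.+1 r i.+1 = r * binpmf m r i + (1 - r) * binpmf m r i.+1.
Proof.
rewrite /binpmf binS natrD subSS.
have [lt_im | le_mi] := ltnP i m; first by rewrite -(subnSK lt_im) !exprS; ring.
by rewrite (bin_small (n := m)) ?ltnS // exprS; ring.
Qed.

Lemma eq_bin_expect m h1 h2 :
  (forall i, h1 i = h2 i) -> bin_expect m r h1 = bin_expect m r h2.
Proof. by move=> eq_h; apply: eq_bigr => i _; rewrite eq_h. Qed.

Lemma ler_bin_expect m h1 h2 :
  (forall i, h1 i <= h2 i) -> bin_expect m r h1 <= bin_expect m r h2.
Proof. by move=> le_h; apply: ler_sum => i _; rewrite ler_wpM2l ?binpmf_ge0. Qed.

Lemma bin_expect0 h : bin_expect 0 r h = h 0%N.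
Proof. by rewrite /bin_expect big_ord1 /binpmf bin0 !expr0 !mul1r. Qed.

Lemma bin_expectS m h :
  bin_expect m.+1 r h = bin_expect m r (fun i => (1 - r) * h i + r * h i.+1).
Proof.
have widen : \sum_(i < m.+1) (1 - r) * binpmf m r i * h i
           = \sum_(i < m.+2) (1 - r) * binpmf m r i * h i.
  by rewrite [RHS]big_ord_recr /= binpmf_small // mulr0 mul0r addr0.
rewrite /bin_expect big_ord_recl binpmfS0.
under eq_bigr do rewrite lift0 binpmfSS mulrDl.
under [RHS]eq_bigr do rewrite mulrDr [_ * ((1 - r) * _)]mulrCA [_ * (r * _)]mulrCA
  [(1 - r) * (_ * _)]mulrA [r * (_ * _)]mulrA.
rewrite !big_split /= widen [X in _ = X + _]big_ord_recl.
under [X in _ = _ + X + _]eq_bigr do rewrite lift0.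
by rewrite addrCA addrC.
Qed.

Lemma bin_expect_cst m c : bin_expect m r (fun=> c) = c.
Proof.
elim: m => [|m IH]; first by rewrite bin_expect0.
by rewrite bin_expectS -[RHS]IH; apply: eq_bin_expect => i; ring.
Qed.

Lemma bin_expectD m1 m2 h :
  bin_expect m1 r (fun i1 => bin_expect m2 r (fun i2 => h (i1 + i2)%N))
  = bin_expect (m1 + m2) r h.
Proof.
elim: m2 m1 h => [|m2 IH] m1 h.
  by rewrite addn0; apply: eq_bin_expect => i; rewrite bin_expect0 addn0.
rewrite addnS bin_expectS -IH; apply: eq_bin_expect => i; rewrite bin_expectS.
by apply: eq_bin_expect => j; rewrite addnS.
Qed.

Lemma ler_bin_expect_trials m m' h :
  {homo h : i j / (i <= j)%N >-> i <= j} -> (m <= m')%N ->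
  bin_expect m r h <= bin_expect m' r h.
Proof.
move=> h_homo /subnK <-; elim: (m' - m)%N => [|d IH]; first by rewrite add0n.
apply: le_trans IH _; rewrite addSn bin_expectS; apply: ler_bin_expect => i.
case/andP: r01 => r0 _.
by rewrite -{1}[h i]mul1r -{1}(subrK r 1) mulrDl lerD2l ler_wpM2l ?h_homo.
Qed.

End BinomialExpectation.

Lemma bin_expect_exchange (R : realType) (r s : R) m k (F : nat -> nat -> R) :
  bin_expect m r (fun i => bin_expect k s (F i))
  = bin_expect k s (fun j => bin_expect m r (F^~ j)).
Proof.
rewrite /bin_expect; under eq_bigr do rewrite mulr_sumr.
rewrite exchange_big; apply: eq_bigr => j _; rewrite mulr_sumr.
by apply: eq_bigr => i _; rewrite mulrCA.
Qed.

Lemma leq_mul_of_subn_divn k N m w :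
  ((k - m %/ N) * N <= w)%N -> (k * N <= m + w)%N.
Proof.
rewrite mulnBl; have := leq_trunc_div m N.
by move: (m %/ N * N)%N (k * N)%N => F K; lia.
Qed.

Definition nondecreasing2 (R : realType) (f : nat -> nat -> R) :=
  forall u u' v v', (u <= u')%N -> (v <= v')%N -> f u v <= f u' v'.

Section CooperativeChain.
Variables (R : realType) (p q : R).
Hypotheses (p01 : 0 <= p <= 1) (q01 : 0 <= q <= 1).

Lemma chain_expectS n x y f :
  chain_expect p q n.+1 x y f =
  bin_expect (2 * (x + y)) q (fun i =>
    bin_expect (2 * minn x y) p (fun j => chain_expect p q n i j f)).
Proof.
rewrite /bin_expect /=; apply: eq_bigr => i _; rewrite mulr_sumr.
by apply: eq_bigr => j _; rewrite mulrA.
Qed.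

Lemma eq_chain_expect n x y f g : (forall u v, f u v = g u v) ->
  chain_expect p q n x y f = chain_expect p q n x y g.
Proof.
move=> eq_fg; elim: n x y => [|n IH] x y; first exact: eq_fg.
by rewrite !chain_expectS; do 2![apply: eq_bin_expect => ?]; apply: IH.
Qed.

Lemma ler_chain_expect n x y f g : (forall u v, f u v <= g u v) ->
  chain_expect p q n x y f <= chain_expect p q n x y g.
Proof.
move=> le_fg; elim: n x y => [|n IH] x y; first exact: le_fg.
by rewrite !chain_expectS; do 2![apply: ler_bin_expect => // ?]; apply: IH.
Qed.

Lemma chain_expect_cst n x y c : chain_expect p q n x y (fun _ _ => c) = c.
Proof.
elim: n x y => [|n IH] x y //; rewrite chain_expectS.
under eq_bin_expect do under eq_bin_expect do rewrite IH.
by under eq_bin_expect do rewrite bin_expect_cst; rewrite bin_expect_cst.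
Qed.

Lemma chain_expect_bin_expect n x y m r (F : nat -> nat -> nat -> R) :
  chain_expect p q n x y (fun u v => bin_expect m r (F u v))
  = bin_expect m r (fun k => chain_expect p q n x y (fun u v => F u v k)).
Proof.
elim: n x y => [|n IH] x y //; rewrite chain_expectS.
under eq_bin_expect do under eq_bin_expect do rewrite IH.
under eq_bin_expect do rewrite bin_expect_exchange.
by rewrite bin_expect_exchange; apply: eq_bin_expect => k; rewrite chain_expectS.
Qed.

Lemma nondecreasing2_chain_expect n f :
  nondecreasing2 f -> nondecreasing2 (fun x y => chain_expect p q n x y f).
Proof.
move=> f_homo; elim: n => [|n IH] // u u' v v' le_u le_v; rewrite !chain_expectS.
apply: (@le_trans _ _ (bin_expect (2 * (u + v)) q (fun i =>
  bin_expect (2 * minn u' v') p (fun j => chain_expect p q n i j f)))).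
  apply: ler_bin_expect => // i; apply: ler_bin_expect_trials => //; last by lia.
  by move=> j j' le_j; apply: IH.
apply: ler_bin_expect_trials => //; last by lia.
by move=> i i' le_i; apply: ler_bin_expect => // j; apply: IH.
Qed.

Lemma chain_expect_superadditive n x1 y1 x2 y2 g : nondecreasing2 g ->
  chain_expect p q n x1 y1 (fun u1 v1 =>
    chain_expect p q n x2 y2 (fun u2 v2 => g (u1 + u2)%N (v1 + v2)%N))
  <= chain_expect p q n (x1 + x2) (y1 + y2) g.
Proof.
elim: n x1 y1 x2 y2 g => [|n IH] x1 y1 x2 y2 g g_homo //.
set M1 := (2 * (x1 + y1))%N; set K1 := (2 * minn x1 y1)%N.
set M2 := (2 * (x2 + y2))%N; set K2 := (2 * minn x2 y2)%N.
set CE := fun u v => chain_expect p q n u v g.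
have CE_homo : nondecreasing2 CE by exact: nondecreasing2_chain_expect.
have coupled_step : chain_expect p q n.+1 x1 y1 (fun u1 v1 =>
    chain_expect p q n.+1 x2 y2 (fun u2 v2 => g (u1 + u2)%N (v1 + v2)%N))
  <= bin_expect M1 q (fun i1 => bin_expect K1 p (fun j1 =>
       bin_expect M2 q (fun i2 => bin_expect K2 p (fun j2 =>
         CE (i1 + i2)%N (j1 + j2)%N)))).
  rewrite chain_expectS; do 2![apply: ler_bin_expect => // ?].
  under eq_chain_expect do rewrite chain_expectS.
  rewrite chain_expect_bin_expect; apply: ler_bin_expect => // i2.
  rewrite chain_expect_bin_expect; apply: ler_bin_expect => // j2.
  exact: IH.
apply: (le_trans coupled_step); rewrite chain_expectS.
under eq_bin_expect do rewrite bin_expect_exchange.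
under eq_bin_expect do under eq_bin_expect do rewrite bin_expectD.
have -> : (2 * (x1 + x2 + (y1 + y2)) = M1 + M2)%N by rewrite /M1 /M2; lia.
rewrite -bin_expectD; do 2![apply: ler_bin_expect => // ?].
by apply: ler_bin_expect_trials => // [j j' le_j|]; [apply: CE_homo | lia].
Qed.

Lemma nondecreasing2_indicator_min K :
  nondecreasing2 (fun u v => ((K <= minn u v)%N%:R : R)).
Proof.
move=> u u' v v' le_u le_v; have [le_K|] := boolP (K <= minn u v)%N.
  by have -> : (K <= minn u' v')%N by lia.
by move=> _; rewrite ler0n.
Qed.

Lemma gamma_conv_tail_le_chain_prob N T a k x y :
  (a * N <= x)%N -> (a * N <= y)%N ->
  gamma_conv_tail p q N T a k
    <= chain_prob p q T x y (fun u v => (k * N <= minn u v)%N).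
Proof.
elim: a k x y => [|a IH] k x y le_x le_y.
  rewrite /chain_prob /=; case: k => [|k].
    by rewrite (@eq_chain_expect _ _ _ _ (fun _ _ => 1)) ?chain_expect_cst.
  apply: (@le_trans _ _ (chain_expect p q T x y (fun _ _ => 0))).
    by rewrite chain_expect_cst.
  by apply: ler_chain_expect => u v.
rewrite mulSn in le_x le_y.
have [le_Nx le_Ny] : (N <= x)%N /\ (N <= y)%N by lia.
have [le_x' le_y'] : (a * N <= x - N)%N /\ (a * N <= y - N)%N by lia.
rewrite /= /chain_prob -(subnKC le_Nx) -(subnKC le_Ny).
apply: le_trans (chain_expect_superadditive T N N (x - N) (y - N)
  (nondecreasing2_indicator_min (k * N))).
apply: ler_chain_expect => u1 v1; apply: le_trans (IH _ _ _ le_x' le_y') _.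
apply: ler_chain_expect => u2 v2 /=.
have [/leq_mul_of_subn_divn le_k|] := boolP ((k - minn u1 v1 %/ N) * N <= _)%N.
  by have -> : (k * N <= minn (u1 + u2) (v1 + v2))%N by lia.
by rewrite ler0n.
Qed.

End CooperativeChain.

Theorem lemma2 (R : realType) (p q : R) (x y k N T : nat) :
  0 < p < 1 -> 0 < q < 1 -> (0 < N)%N -> (0 < T)%N ->
  gamma_conv_tail p q N T (minn (x %/ N) (y %/ N)) k
    <= chain_prob p q T x y (fun u v => (k * N <= minn u v)%N).
Proof.
move=> /andP[p0 p1] /andP[q0 q1] _ _.
apply: gamma_conv_tail_le_chain_prob; rewrite ?ltW //.
- by apply: leq_trans (leq_trunc_div x N); rewrite leq_mul2r geq_minl orbT.
- by apply: leq_trans (leq_trunc_div y N); rewrite leq_mul2r geq_minr orbT.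
Qed.
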